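(* Let $d\ge 1$ and let $\mu$ be a probability distribution on $Q_d$ such that for all $i\in[d]$ \[ w_i^0\geq \begin{cases}\frac34-\frac1{4d} & \text{if $d$ is odd},\\[2pt] \frac34-\frac1{4(d-1)} & \text{if $d$ is even}.\end{cases} \] Then $(\mathbf 0,\mathbf 0)$ is an equilibrium.
   Context: $Q_d=\{0,1\}^d$ with the Hamming distance $d(X,Y)=|\{i: x_i\neq y_i\}|$. A probability distribution on $Q_d$ is a function $\mu:Q_d\to\mathbb R_{\ge0}$ with $\sum_{V\in Q_d}\mu(V)=1$, extended to subsets by $\mu(\mathcal A)=\sum_{V\in\mathcal A}\mu(V)$. For $A,B\in Q_d$ let $V(A,B)=\{X\in Q_d: d(X,A)<d(X,B)\}$ and $T(A,B)=\{X\in Q_d: d(X,A)=d(X,B)\}$. The payoffs in position $(A,B)$ (Player 1 at $A$, Player 2 at $B$) are $P_1(A,B)=\mu(V(A,B))+\frac12\mu(T(A,B))$ and $P_2(A,B)=\mu(V(B,A))+\frac12\mu(T(A,B))$. The pair $(A,B)$ is an equilibrium if $P_1(A,B)\ge P_1(A',B)$ for all $A'\in Q_d$ and $P_2(A,B)\ge P_2(A,B')$ for all $B'\in Q_d$. For $i\in[d]$, $w_i^0=\mu(\{X\in Q_d: x_i=0\})$. $\mathbf 0=(0,\dots,0)$. *)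

From mathcomp Require Import all_boot all_order all_algebra.
Set Implicit Arguments. Unset Strict Implicit. Unset Printing Implicit Defensive.
Import Order.TTheory GRing.Theory Num.Theory.
Local Open Scope ring_scope.

Definition cube (d : nat) := {ffun 'I_d -> bool}.

Definition hdist (d : nat) (X Y : cube d) : nat := #|[set i | X i != Y i]|.

Section Game.
Variables (R : realFieldType) (d : nat).

Definition is_distr (mu : cube d -> R) : Prop :=
  (forall V, 0 <= mu V) /\ \sum_(V : cube d) mu V = 1.

Definition measure (mu : cube d -> R) (A : {set cube d}) : R := \sum_(V in A) mu V.

Definition Vor (A B : cube d) : {set cube d} := [set X : cube d | hdist X A < hdist X B]%N.
Definition Tie (A B : cube d) : {set cube d} := [set X : cube d | hdist X A == hdist X B].

Definition P1 (mu : cube d -> R) (A B : cube d) : R :=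
  measure mu (Vor A B) + measure mu (Tie A B) / 2%:R.
Definition P2 (mu : cube d -> R) (A B : cube d) : R :=
  measure mu (Vor B A) + measure mu (Tie A B) / 2%:R.

Definition equilibrium (mu : cube d -> R) (A B : cube d) : Prop :=
  (forall A', P1 mu A' B <= P1 mu A B) /\ (forall B', P2 mu A B' <= P2 mu A B).

(* w_i^0 = mu({X : x_i = 0}) ; coordinate value 0 is represented by false *)
Definition w0 (mu : cube d -> R) (i : 'I_d) : R := measure mu [set X : cube d | X i == false].

Definition zero_pt : cube d := [ffun => false].
End Game.

From mathcomp Require Import all_boot all_order all_algebra.
From mathcomp Require Import zify ring lra.
Set Implicit Arguments. Unset Strict Implicit. Unset Printing Implicit Defensive.
Import Order.TTheory GRing.Theory Num.Theory.
Local Open Scope ring_scope.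

(* By symmetry it suffices to show that no deviation A earns Player 1 more than
   1/2 against a player at 0.  With k = |A| and s = |X ∩ A|, a voter X is won by
   A iff 2s > k and tied iff 2s = k, so twice the payoff of X is at most 4s/m,
   where m is the least even number above k.  Averaging over mu, E[s] is the sum
   over i in A of 1 - w_i^0 <= 1/4 + 1/(4D), D the largest odd number <= d, and
   k (D + 1) <= m D for all k <= d closes the estimate. *)

Definition weight {d} (A : cube d) : nat := \sum_i (A i : nat).
Definition overlap {d} (X A : cube d) : nat := \sum_i ((X i && A i) : nat).

(* Twice the share of voter X won by a candidate at A facing a candidate at B. *)
Definition votes {d} (A B X : cube d) : nat :=
  if (hdist X A < hdist X B)%N then 2 else if hdist X A == hdist X B then 1 else 0.

Lemma hdist_sum d (X Y : cube d) : hdist X Y = (\sum_i (X i != Y i : nat))%N.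
Proof.
by rewrite /hdist -sum1_card big_mkcond /=; apply: eq_bigr => i _; rewrite inE; case: (_ != _).
Qed.

Lemma hdist_zero_overlap d (X A : cube d) :
  (hdist X (zero_pt d) + weight A = hdist X A + 2 * overlap X A)%N.
Proof.
rewrite !hdist_sum /weight /overlap big_distrr -!big_split /=.
by apply: eq_bigr => i _; rewrite ffunE; case: (X i); case: (A i).
Qed.

Lemma weight_le d (A : cube d) : (weight A <= d)%N.
Proof.
rewrite -[X in (_ <= X)%N]card_ord -sum1_card.
by apply: leq_sum => i _; case: (A i).
Qed.

Lemma weight_eq0 d (A : cube d) : weight A = 0%N -> A = zero_pt d.
Proof.
move/eqP; rewrite sum_nat_eq0 => /forallP A0.
by apply/ffunP => i; rewrite ffunE; move: (A0 i); case: (A i).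
Qed.

Section Payoffs.
Variables (R : realFieldType) (d : nat) (mu : cube d -> R).

Lemma P1_votes (A B : cube d) :
  P1 mu A B = (\sum_X mu X * (votes A B X)%:R) / 2%:R.
Proof.
rewrite /P1 /measure big_mkcond [X in _ + X / _]big_mkcond /= !mulr_suml -big_split.
apply: eq_bigr => X _; rewrite /Vor /Tie /votes !inE.
case: ltngtP => _ /=; rewrite ?mulr0 ?mul0r ?add0r ?addr0 ?mulr1 //.
by rewrite mulfK // pnatr_eq0.
Qed.

Lemma P2_P1 (A B : cube d) : P2 mu A B = P1 mu B A.
Proof.
by rewrite /P2 /P1; congr (_ + measure _ _ / _); apply/setP => X; rewrite !inE eq_sym.
Qed.

Hypothesis mu_distr : is_distr mu.

Lemma P1_self (A : cube d) : P1 mu A A = 1 / 2%:R.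
Proof.
have [_ mu1] := mu_distr.
rewrite P1_votes; congr (_ / _); rewrite -[RHS]mu1.
by apply: eq_bigr => X _; rewrite /votes ltnn eqxx mulr1.
Qed.

Lemma expected_overlap (A : cube d) :
  \sum_X mu X * (overlap X A)%:R = \sum_i (A i : nat)%:R * (1 - w0 mu i).
Proof.
have [_ mu1] := mu_distr.
under eq_bigr do rewrite natr_sum mulr_sumr.
rewrite exchange_big /=; apply: eq_bigr => i _.
case: (A i) => /=; last by rewrite mul0r big1 // => X _; rewrite andbF mulr0.
rewrite mul1r /w0 /measure -[in RHS]mu1 [X in _ - X]big_mkcond /= -sumrB.
by apply: eq_bigr => X _; rewrite inE andbT; case: (X i); rewrite ?mulr1 ?mulr0 ?subr0 ?subrr.
Qed.

End Payoffs.

Definition odd_floor (n : nat) : nat := if odd n then n else n.-1.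
Definition even_ceil (n : nat) : nat := if odd n then n.+1 else n.+2.

Lemma votes_zero_overlap d (A X : cube d) : (0 < weight A)%N ->
  (votes A (zero_pt d) X * even_ceil (weight A) <= 4 * overlap X A)%N.
Proof.
move=> k_gt0; have := hdist_zero_overlap X A; have := odd_double_half (weight A).
rewrite /votes /even_ceil; move: (weight A) (overlap X A) k_gt0 => k s.
move: (hdist X _) (hdist X A) => a b.
by case: (odd k) => /= k_gt0; rewrite -addnn; case: (ltngtP b a); lia.
Qed.

Lemma even_ceil_odd_floor_bound d k : (1 <= d)%N -> (k <= d)%N ->
  (k * (odd_floor d).+1 <= even_ceil k * odd_floor d)%N.
Proof.
move=> d_ge1 k_le_d; have := odd_double_half k; have := odd_double_half d.
by rewrite /odd_floor /even_ceil; case: (odd k); case: (odd d); rewrite /= -!addnn; nia.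
Qed.

Lemma P1_vs_zero_le_half (R : realFieldType) d (mu : cube d -> R) (A : cube d) :
  (1 <= d)%N -> is_distr mu ->
  (forall i, 3%:R / 4%:R - 1 / (4 * odd_floor d)%:R <= w0 mu i) ->
  P1 mu A (zero_pt d) <= 1 / 2%:R.
Proof.
move=> d_ge1 mu_distr w0_ge; have [mu_ge0 _] := mu_distr.
have [/weight_eq0 ->|k_gt0] := posnP (weight A); first by rewrite P1_self.
set k := weight A in k_gt0 *; set D := odd_floor d; set m := even_ceil k.
have D_gt0 : (0 < D)%N.
  by have := odd_double_half d; rewrite /D /odd_floor; case: (odd d) => /=; lia.
have m_gt0 : (0 : R) < m%:R by rewrite ltr0n /m /even_ceil; case: (odd k).
have miss_le i : 1 - w0 mu i <= 1 / 4%:R + 1 / (4 * D)%:R by have := w0_ge i; lra.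
have fourE : 4%:R * (k%:R * (1 / 4%:R + 1 / (4 * D)%:R)) = (k * D.+1)%:R / D%:R :> R.
  by rewrite natrM -addn1 natrD natrM; field; rewrite pnatr_eq0 -lt0n.
rewrite P1_votes ler_pM2r ?invr_gt0 ?ltr0n // -(ler_pM2r m_gt0) mul1r mulr_suml.
apply: le_trans (_ : \sum_X mu X * (4 * overlap X A)%:R <= _).
  apply: ler_sum => X _; rewrite -mulrA -natrM ler_wpM2l // ler_nat.
  exact: votes_zero_overlap.
under eq_bigr do rewrite natrM mulrCA.
rewrite -mulr_sumr expected_overlap //.
apply: le_trans (_ : 4%:R * \sum_i (A i : nat)%:R * (1 / 4%:R + 1 / (4 * D)%:R) <= _).
  by rewrite ler_wpM2l ?ler0n //; apply: ler_sum => i _; rewrite ler_wpM2l ?ler0n.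
rewrite -mulr_suml -natr_sum fourE ler_pdivrMr ?ltr0n // -natrM ler_nat.
exact: even_ceil_odd_floor_bound (weight_le A).
Qed.

Theorem mainTheorem2 (R : realFieldType) (d : nat) (mu : cube d -> R) :
  (1 <= d)%N ->
  is_distr mu ->
  (forall i : 'I_d,
     w0 mu i >= (if odd d then 3%:R / 4%:R - 1 / (4 * d)%:R
                 else 3%:R / 4%:R - 1 / (4 * d.-1)%:R)) ->
  equilibrium mu (zero_pt d) (zero_pt d).
Proof.
move=> d_ge1 mu_distr w0_ge.
have w0_ge' i : 3%:R / 4%:R - 1 / (4 * odd_floor d)%:R <= w0 mu i.
  by have := w0_ge i; rewrite /odd_floor; case: (odd d).
split=> [A | B].
- by rewrite P1_self //; apply: P1_vs_zero_le_half.
- by rewrite !P2_P1 P1_self //; apply: P1_vs_zero_le_half.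
Qed.
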